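(* An abelian group $A$ is almost divisible if and only if for every sequence $(q_n)_{n\in\mathbb{N}}$ of integers there exists $m\in\mathbb{N}$ such that for every $n>m$ we have $q_{<n}A=q_{<m}A$.
   Context: For a prime $p$, the $p$-length $l_p(A)$ of an abelian group $A$ is the smallest ordinal $\lambda$ such that $p^\lambda A$ is $p$-divisible, where $p^0A=A$, $p^{\alpha+1}A=p(p^\alpha A)$ and $p^\alpha A=\bigcap_{\beta<\alpha}p^\beta A$ for limit $\alpha$. An abelian group $A$ is called almost divisible if $l_p(A)=0$ for all but finitely many primes $p$ and $l_p(A)<\omega$ for every prime $p$. For a sequence $(q_n)_{n\in\mathbb{N}}$ of integers, $q_{<n}:=\prod_{l<n}q_l$ (so $q_{<0}=1$). *)

From mathcomp Require Import all_boot all_order all_algebra.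
Unset Printing Implicit Defensive.
Import GRing.Theory.
Local Open Scope ring_scope.

Definition seteqP (A : zmodType) (S T : A -> Prop) : Prop :=
  forall x, S x <-> T x.

Definition zmulset (A : zmodType) (q : int) (S : A -> Prop) : A -> Prop :=
  fun y => exists2 x, S x & y = x *~ q.

Definition nmulset (A : zmodType) (p : nat) (S : A -> Prop) : A -> Prop :=
  fun y => exists2 x, S x & y = x *+ p.

Fixpoint pstage (A : zmodType) (p : nat) (k : nat) : A -> Prop :=
  match k with
  | 0 => fun _ => True
  | k'.+1 => @nmulset A p (pstage A p k')
  end.

Definition p_divisible (A : zmodType) (p : nat) (S : A -> Prop) : Prop :=
  @seteqP A (@nmulset A p S) S.

(* l_p(A) = 0  <->  p^0 A = A is p-divisible. *)
Definition plength_zero (A : zmodType) (p : nat) : Prop :=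
  @p_divisible A p (pstage A p 0).

(* l_p(A) < omega  <->  some finite stage p^n A is p-divisible
   (the least ordinal lambda with p^lambda A p-divisible is finite). *)
Definition plength_finite (A : zmodType) (p : nat) : Prop :=
  exists n : nat, @p_divisible A p (pstage A p n).

Definition almost_divisible (A : zmodType) : Prop :=
  (exists s : seq nat, forall p, prime p -> p \notin s -> plength_zero A p) /\
  (forall p, prime p -> plength_finite A p).

(* q_{<n} = prod_{l<n} q_l  (so q_{<0} = 1). *)
Definition qprod (q : nat -> int) (n : nat) : int := \prod_(l < n) q l.

From mathcomp Require Import all_boot all_order all_algebra.
From mathcomp Require Import ring zify.
From Stdlib Require Import Classical ClassicalEpsilon.
Import GRing.Theory Num.Theory.

(* For d : nat write dA for the subgroup of d-fold multiples of A.  Every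
   subgroup q_{<n} A equals |q_{<n}| A, so the theorem is about the chains
   dA for divisor chains d_0 | d_1 | ... of natural numbers.

   Call M > 0 *saturated* for A when p^(v_p M) A = p^(v_p M + 1) A for every
   prime p.  Using Bezout identities one shows that MA = MdA for all d > 0,
   and hence dA = gcd(d, M) A for every d > 0.  An almost divisible group has
   a saturated M (the product of p^N over the finitely many primes of nonzero
   p-length, N bounding those lengths), so along a chain with nonzero terms
   dA is governed by the bounded, monotone sequence gcd(d_n, M), which
   stabilizes; chains reaching 0 stabilize trivially.

   Conversely, the constant sequence p yields p^m A = p^(m+1) A, i.e. finite
   p-length; and if infinitely many primes had nonzero p-length, the strictly
   increasing sequence r of such primes would give r_{<m} A = r_{<m} r_m A for
   some m, whence A = r_m A by cancelling the coprime factor r_{<m}. *)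

Lemma monotone_bounded_stabilizes (f : nat -> nat) (B : nat) :
  {homo f : m n / (m <= n)%N} -> (forall n, (f n <= B)%N) ->
  exists m, forall n, (m <= n)%N -> f n = f m.
Proof.
move=> mono bounded.
suff gap_ind k m : (B - f m <= k)%N ->
    exists m', forall n, (m' <= n)%N -> f n = f m'.
  by apply: (gap_ind B 0%N); rewrite leq_subr.
elim: k m => [|k IH] m gap.
  exists m => n le_mn; have := mono _ _ le_mn; have := bounded n; lia.
have [m_stable|] := classic (forall n, (m <= n)%N -> f n = f m); first by exists m.
move=> /not_all_ex_not [n unstable_n].
have [le_mn neq] := imply_to_and _ _ unstable_n.
by apply: (IH n); have := mono _ _ le_mn; have := bounded n; lia.
Qed.

Lemma abs_qprod (q : nat -> int) (n : nat) :
  `|qprod q n|%N = (\prod_(l < n) `|q l|)%N.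
Proof. by rewrite /qprod (big_morph absz abszM (_ : `|1%R| = 1%N)). Qed.

Lemma qprod_dvd (q : nat -> int) (n n' : nat) :
  (n <= n')%N -> (`|qprod q n| %| `|qprod q n'|)%N.
Proof. by move=> /subnKC <-; rewrite !abs_qprod big_split_ord dvdn_mulr. Qed.

Lemma qprod_zero {q : nat -> int} {j n : nat} :
  q j = 0%R -> (j < n)%N -> qprod q n = 0%R.
Proof.
by move=> qj0 lt_jn; apply/eqP/prodf_eq0; exists (Ordinal lt_jn); rewrite ?qj0.
Qed.

Lemma qprod_neq0 (q : nat -> int) (n : nat) :
  (forall j, q j != 0%R) -> qprod q n != 0%R.
Proof. by move=> q_neq0; apply/prodf_neq0 => l _; apply: q_neq0. Qed.

Lemma increasing_primes_coprime (r : nat -> nat) :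
  (forall n, prime (r n)) -> (forall n, (r n < r n.+1)%N) ->
  forall m, coprime (r m) (\prod_(l < m) r l).
Proof.
move=> r_pr r_inc m; apply: (big_ind (coprime (r m))) => [|a b|l _].
- exact: coprimen1.
- by move=> co_a co_b; rewrite coprimeMr co_a co_b.
rewrite (prime_coprime _ (r_pr m)) (dvdn_prime2 (r_pr m) (r_pr l)) eq_sym.
by rewrite neq_ltn (homo_ltn ltn_trans r_inc (ltn_ord l)).
Qed.

Lemma unbounded_prime_sequence {P : nat -> Prop} :
  (forall k, exists p, [/\ prime p, (k < p)%N & P p]) ->
  exists r : nat -> nat,
    [/\ forall n, prime (r n), forall n, (r n < r n.+1)%N & forall n, P (r n)].
Proof.
move=> /choice [g g_spec]; exists (fun n => g (iter n g 0%N)).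
by split=> n; [case: (g_spec (iter n g 0%N)) | case: (g_spec (iter n.+1 g 0%N))
  | case: (g_spec (iter n g 0%N))].
Qed.

Section Multiples.
Variable A : zmodType.
Local Open Scope ring_scope.

Definition multiples (d : nat) (x : A) : Prop := exists y : A, x = y *+ d.

Lemma zmulset_multiples (z : int) (x : A) :
  zmulset A z (fun _ => True) x <-> multiples `|z|%N x.
Proof.
have [z_ge0|z_lt0] := lerP 0 z.
  rewrite -{1}(gez0_abs z_ge0); split; first by case=> y _ ->; exists y; rewrite pmulrn.
  by case=> y ->; exists y; rewrite ?pmulrn.
rewrite -{1}(opprK z) -(ltz0_abs z_lt0); split.
  by case=> y _ ->; exists (- y); rewrite mulrNz -mulNrz pmulrn.
by case=> y ->; exists (- y) => //; rewrite mulrNz mulNrz opprK pmulrn.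
Qed.

Lemma pstage_multiples (p k : nat) (x : A) : pstage A p k x <-> multiples (p ^ k) x.
Proof.
elim: k x => [|k IH] x /=.
  by split=> // _; exists x; rewrite expn0 mulr1n.
split.
  by case=> y /IH [z ->] ->; exists z; rewrite -mulrnA expnSr.
case=> z ->; exists (z *+ p ^ k); first by apply/IH; exists z.
by rewrite -mulrnA expnSr.
Qed.

Lemma multiples_dvd (a b : nat) (x : A) : (a %| b)%N -> multiples b x -> multiples a x.
Proof. by case/dvdnP=> c -> [y ->]; exists (y *+ c); rewrite -mulrnA. Qed.

Lemma multiples_add (d : nat) (x y : A) :
  multiples d x -> multiples d y -> multiples d (x + y).
Proof. by case=> u -> [v ->]; exists (u + v); rewrite mulrnDl. Qed.

Lemma multiples_zmul (d : nat) (x : A) (k : int) : multiples d x -> multiples d (x *~ k).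
Proof. by case=> u ->; exists (u *~ k); rewrite !pmulrn mulrzAC. Qed.

Lemma bezout_combination (a b : nat) (x : A) :
  exists u v : int, x *+ gcdn a b = x *~ u *+ a + x *~ v *+ b.
Proof.
have [u [v uv]] := Bezoutz a b; exists u, v.
by rewrite !pmulrn -!mulrzA -mulrzDr uv.
Qed.

Lemma multiples_coprime_mul (a b : nat) (x : A) : coprime a b ->
  multiples a x -> multiples b x -> multiples (a * b) x.
Proof.
move=> /eqP co_ab [y x_ya] [z x_zb].
have [u [v]] := bezout_combination a b x; rewrite co_ab mulr1n => ->.
exists (z *~ u + y *~ v); rewrite {1}x_zb {1}x_ya.
by rewrite !pmulrn PoszM mulrzDl -!mulrzA; congr (_ *~ _ + _ *~ _); ring.
Qed.

Lemma multiples_cancel (a b : nat) (x : A) : coprime a b ->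
  multiples b (x *+ a) -> multiples b x.
Proof.
move=> /eqP co_ab xa_b; have [u [v]] := bezout_combination a b x.
rewrite co_ab mulr1n => ->; apply: multiples_add; last by exists (x *~ v).
by rewrite pmulrn -mulrzA mulrC mulrzA -pmulrn; apply: multiples_zmul.
Qed.

Definition stable (p k : nat) : Prop :=
  forall x, multiples (p ^ k) x -> multiples (p ^ k.+1) x.

Lemma stable_up (p k j : nat) : stable p k -> (k <= j)%N -> stable p j.
Proof.
move=> st_k /subnKC <- x [y ->].
have [z yk_z] : multiples (p ^ k.+1) (y *+ p ^ k) by apply: st_k; exists y.
by exists z; rewrite expnD mulrnA yk_z -mulrnA -expnD addSn.
Qed.

Lemma p_divisible_stable (p k : nat) : p_divisible A p (pstage A p k) <-> stable p k.
Proof.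
have stage_k := pstage_multiples p k; have stage_k1 := pstage_multiples p k.+1.
split=> [div_k x /stage_k x_k | st_k x]; first exact/stage_k1/(div_k x).
split=> [/stage_k1 x_k1 | /stage_k /st_k /stage_k1 //].
by apply/stage_k; apply: multiples_dvd x_k1; rewrite expnS dvdn_mull.
Qed.

Definition saturated (M : nat) : Prop := forall p, prime p -> stable p (logn p M).

(* For saturated M and a prime p, MA = MpA: write M = M' p^k with p coprime
   to M'; then x in MA lies in M'A and in p^(k+1) A, hence in M' p^(k+1) A. *)
Lemma saturated_mul_prime (M p : nat) (x : A) : (0 < M)%N -> saturated M ->
  prime p -> multiples M x -> multiples (M * p) x.
Proof.
move=> M_gt0 sat_M p_pr x_M; have [M' co_M' M_eq] := pfactor_coprime p_pr M_gt0.
have x_M' : multiples M' x by apply: multiples_dvd x_M; rewrite M_eq dvdn_mulr.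
have x_pk1 : multiples (p ^ (logn p M).+1) x.
  by apply: (sat_M _ p_pr); apply: multiples_dvd x_M; rewrite {2}M_eq dvdn_mull.
rewrite M_eq -mulnA -expnSr; apply: multiples_coprime_mul x_M' x_pk1.
by rewrite coprime_sym coprimeXl.
Qed.

(* Iterating over the prime factors of d: MA = MdA for every d > 0. *)
Lemma saturated_mul (M d : nat) (x : A) : (0 < M)%N -> saturated M ->
  (0 < d)%N -> multiples M x -> multiples (M * d) x.
Proof.
move=> M_gt0 sat_M; elim/ltn_ind: d x => d IH x d_gt0 x_M.
have [d_le1|d_gt1] := leqP d 1; first by rewrite (_ : d = 1%N) ?muln1 //; lia.
set p := pdiv d; have p_pr : prime p by apply: pdiv_prime.
have [d' d_eq] : exists d', d = (p * d')%N.
  by exists (d %/ p)%N; rewrite mulnC divnK ?pdiv_dvd.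
have d'_gt0 : (0 < d')%N by move: d_gt0; rewrite d_eq muln_gt0 => /andP[].
have d'_lt : (d' < d)%N by rewrite d_eq ltn_Pmull ?prime_gt1.
have [y x_y] := IH _ d'_lt x d'_gt0 x_M.
have [z yM_z] := saturated_mul_prime _ _ (y *+ M) M_gt0 sat_M p_pr (ex_intro _ y erefl).
by exists z; rewrite x_y d_eq mulnA [in RHS]mulrnA -yM_z mulrnA.
Qed.

Lemma saturated_multiples_gcd (M d : nat) (x : A) : (0 < M)%N -> saturated M ->
  (0 < d)%N -> multiples d x <-> multiples (gcdn d M) x.
Proof.
move=> M_gt0 sat_M d_gt0; split; first by apply: multiples_dvd; apply: dvdn_gcdl.
case=> y ->; have [u [v ->]] := bezout_combination d M y.
apply: multiples_add; first by exists (y *~ u).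
apply: multiples_dvd (dvdn_mull M (dvdnn d)) _.
by apply: saturated_mul => //; exists (y *~ v).
Qed.

Lemma uniform_stable_exponent (s : seq nat) :
  (forall p, prime p -> plength_finite A p) ->
  exists N, forall p, p \in s -> prime p -> stable p N.
Proof.
move=> fin; elim: s => [|a s [N st_N]]; first by exists 0%N.
have [k st_k] : exists k, prime a -> stable a k.
  have [a_pr|_] := boolP (prime a); last by exists 0%N.
  by have [k /p_divisible_stable st_k] := fin a a_pr; exists k.
exists (maxn N k) => p; rewrite inE => /predU1P [-> a_pr | p_s p_pr].
  exact: stable_up (st_k a_pr) (leq_maxr _ _).
exact: stable_up (st_N p p_s p_pr) (leq_maxl _ _).
Qed.

Lemma almost_divisible_saturated :
  almost_divisible A -> exists2 M, (0 < M)%N & saturated M.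
Proof.
case=> -[s zero_out] fin; have [N st_N] := uniform_stable_exponent s fin.
pose M := (\prod_(p <- s | prime p) p ^ N)%N.
have M_gt0 : (0 < M)%N.
  by apply: prodn_cond_gt0 => p p_pr; rewrite expn_gt0 prime_gt0.
exists M => // p p_pr; have [p_s|p_s] := boolP (p \in s); last first.
  have /p_divisible_stable st_0 := zero_out p p_pr p_s.
  exact: stable_up st_0 (leq0n _).
apply: stable_up (st_N p p_s p_pr) _.
by rewrite -pfactor_dvdn // /M (big_rem p p_s) /= p_pr dvdn_mulr.
Qed.

Definition qprod_stabilizes : Prop :=
  forall q : nat -> int, exists m : nat, forall n : nat, (m < n)%N ->
    seteqP A (zmulset A (qprod q n) (fun _ => True))
             (zmulset A (qprod q m) (fun _ => True)).

(* Almost divisible groups satisfy the chain condition: with M saturated,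
   q_{<n} A = gcd(|q_{<n}|, M) A, and these gcds stabilize. *)
Lemma almost_divisible_qprod_stabilizes : almost_divisible A -> qprod_stabilizes.
Proof.
move=> /almost_divisible_saturated [M M_gt0 sat_M] q.
have [[j qj0] | q_neq0] := classic (exists j, q j = 0).
  exists j.+1 => n lt_jn x; have lt_jn' := ltn_trans (ltnSn j) lt_jn.
  by rewrite (qprod_zero qj0 (ltnSn j)) (qprod_zero qj0 lt_jn').
have abs_gt0 n : (0 < `|qprod q n|)%N.
  by rewrite absz_gt0 qprod_neq0 // => j; apply/eqP => qj0; apply: q_neq0; exists j.
pose g n := gcdn `|qprod q n| M.
have [m g_stab] : exists m, forall n, (m <= n)%N -> g n = g m.
  apply: (monotone_bounded_stabilizes _ M) => [n n' le_nn'|n].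
    apply: dvdn_leq; first by rewrite gcdn_gt0 M_gt0 orbT.
    by rewrite dvdn_gcd dvdn_gcdr andbT (dvdn_trans (dvdn_gcdl _ _)) ?qprod_dvd.
  exact: dvdn_leq M_gt0 (dvdn_gcdr _ _).
exists m => n lt_mn x.
have qprod_g k : zmulset A (qprod q k) (fun _ => True) x <-> multiples (g k) x.
  apply: iff_trans (zmulset_multiples _ _) _.
  exact: (saturated_multiples_gcd _ _ _ M_gt0 sat_M (abs_gt0 k)).
apply: iff_trans (qprod_g n) _; rewrite (g_stab n (ltnW lt_mn)).
exact: iff_sym (qprod_g m).
Qed.

Lemma zmulset_qprod_nat (r : nat -> nat) (n : nat) (x : A) :
  zmulset A (qprod (fun l => (r l)%:Z) n) (fun _ => True) x <->
  multiples (\prod_(l < n) r l) x.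
Proof.
by have := zmulset_multiples (qprod (fun l => (r l)%:Z) n) x; rewrite abs_qprod.
Qed.

Lemma qprod_stabilizes_nat (r : nat -> nat) : qprod_stabilizes ->
  exists m, forall x,
    multiples (\prod_(l < m) r l) x -> multiples (\prod_(l < m.+1) r l) x.
Proof.
move=> stab; have [m stab_m] := stab (fun l => (r l)%:Z); exists m => x.
by move=> /zmulset_qprod_nat /(stab_m m.+1 (ltnSn m) x) /zmulset_qprod_nat.
Qed.

(* The constant sequence p gives p^m A = p^(m+1) A for some m. *)
Lemma qprod_stabilizes_plength_finite (p : nat) :
  qprod_stabilizes -> plength_finite A p.
Proof.
move=> /(qprod_stabilizes_nat (fun=> p)) [m stab_m]; exists m.
have pow k : (\prod_(l < k) p)%N = (p ^ k)%N by rewrite prod_nat_const card_ord.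
by apply/p_divisible_stable; move: stab_m; rewrite !pow.
Qed.

Lemma coprime_sequence_divisible (r : nat -> nat) : qprod_stabilizes ->
  (forall m, coprime (r m) (\prod_(l < m) r l)) ->
  exists m, forall x, multiples (r m) x.
Proof.
move=> /(qprod_stabilizes_nat r) [m stab_m] co_r; exists m => x.
apply: (multiples_cancel (\prod_(l < m) r l)); first by rewrite coprime_sym.
have /stab_m : multiples (\prod_(l < m) r l) (x *+ \prod_(l < m) r l) by exists x.
by apply: multiples_dvd; rewrite big_ord_recr dvdn_mull.
Qed.

(* The chain condition forces almost divisibility: finite lengths by the
   constant sequences, and only finitely many primes of nonzero length since
   an increasing sequence of such primes contradicts the previous lemma. *)
Lemma qprod_stabilizes_almost_divisible : qprod_stabilizes -> almost_divisible A.
Proof.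
move=> stab; split; last by move=> p _; apply: qprod_stabilizes_plength_finite.
apply: NNPP => no_bound.
have bad k : exists p, [/\ prime p, (k < p)%N & ~ plength_zero A p].
  apply: NNPP => no_bad; apply: no_bound; exists (iota 0 k.+1) => p p_pr p_notin.
  apply: NNPP => bad_p; apply: no_bad; exists p; split => //.
  by move: p_notin; rewrite mem_iota add0n ltnS /= -ltnNge.
have [r [r_pr r_inc r_bad]] := unbounded_prime_sequence bad.
have co_r := increasing_primes_coprime r r_pr r_inc.
have [m r_m] := coprime_sequence_divisible r stab co_r.
by apply: (r_bad m); apply/p_divisible_stable => x _; rewrite expn1; apply: r_m.
Qed.

End Multiples.

Theorem mainTheorem2 (A : zmodType) :
  almost_divisible A <->
  (forall q : nat -> int, exists m : nat, forall n : nat, (m < n)%N ->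
     @seteqP A (@zmulset A (qprod q n) (fun _ => True))
            (@zmulset A (qprod q m) (fun _ => True))).
Proof.
split; first exact: almost_divisible_qprod_stabilizes.
exact: qprod_stabilizes_almost_divisible.
Qed.
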